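(* Let $f_1,\dots,f_T\in\mathbb R$ be piecewise constant with change points $0=\eta_0<\eta_1<\dots<\eta_{K+1}=T$, i.e. $f$ is constant on $\{\eta_k+1,\dots,\eta_{k+1}\}$ for each $k$, and let $\kappa_r=|f_{\eta_r+1}-f_{\eta_r}|$. Let $0\le s<e\le T$ be integers such that $\eta_{r-1}\le s<\eta_r<\eta_{r+1}\le\dots\le\eta_{r+q}\le e\le\eta_{r+q+1}$ for some $q\ge1$, with $\eta_{r+1}<e$. If $\eta_r-s\le c_1^2\Delta$ for some $c_1\le1/4$ and $\eta_{r+1}-\eta_r\ge\Delta$, then \[ |\widetilde f^{s,e}_{\eta_r}|\le c_1|\widetilde f^{s,e}_{\eta_{r+1}}|+2\kappa_r\sqrt{\eta_r-s}, \] where for $s<t<e$, \[ \widetilde f^{s,e}_t=\sqrt{\frac{e-t}{(e-s)(t-s)}}\sum_{i=s+1}^tf_i-\sqrt{\frac{t-s}{(e-s)(e-t)}}\sum_{i=t+1}^ef_i. \] *)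

From HB Require Import structures.
From mathcomp Require Import all_boot all_order all_algebra.
From mathcomp Require Import reals.
Set Implicit Arguments. Unset Strict Implicit. Unset Printing Implicit Defensive.
Import Order.TTheory GRing.Theory Num.Theory.
Local Open Scope ring_scope.

Definition ftilde (R : realType) (f : nat -> R) (s e t : nat) : R :=
  Num.sqrt ((e%:R - t%:R) / ((e%:R - s%:R) * (t%:R - s%:R)))
    * (\sum_(s.+1 <= i < t.+1) f i)
  - Num.sqrt ((t%:R - s%:R) / ((e%:R - s%:R) * (e%:R - t%:R)))
    * (\sum_(t.+1 <= i < e.+1) f i).

Definition piecewise_constant (R : realType) (f : nat -> R) (T K : nat)
  (eta : nat -> nat) : Prop :=
  eta 0%N = 0%N /\ eta K.+1 = T /\
  (forall k, (k <= K)%N -> (eta k < eta k.+1)%N) /\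
  (forall k i, (k <= K)%N -> (eta k < i <= eta k.+1)%N -> f i = f (eta k).+1).

From HB Require Import structures.
From mathcomp Require Import all_boot all_order all_algebra.
From mathcomp Require Import reals.
From mathcomp Require Import ring lra zify.
Set Implicit Arguments. Unset Strict Implicit. Unset Printing Implicit Defensive.
Import Order.TTheory GRing.Theory Num.Theory.
Local Open Scope ring_scope.

(* The CUSUM statistic is linear in f and vanishes on constant sequences, so
   f may be shifted by its value b on (eta_r, eta_{r+1}].  Writing
   x = eta_r - s, y = eta_{r+1} - eta_r, z = e - eta_{r+1}, d for the jump and
   U for the sum of the shifted f over (eta_{r+1}, e], both statistics take
   the form w * x d - w' * U.  Each w * x d is at most sqrt x |d|, and
   x <= c1^2 y makes w' at eta_r at most c1 times w' at eta_{r+1}; the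
   triangle inequality concludes. *)

Lemma sum_nat_const_on (R : pzRingType) (F : nat -> R) (c : R) (m n : nat) :
  (m <= n)%N -> (forall i, (m < i <= n)%N -> F i = c) ->
  \sum_(m.+1 <= i < n.+1) F i = (n - m)%:R * c.
Proof.
move=> le_mn Fc; rewrite (eq_big_nat _ _ (F2 := fun=> c)); last first.
  by move=> i /andP[mi]; rewrite ltnS => i_n; apply: Fc; rewrite mi.
by rewrite sumr_const_nat subSS mulr_natl.
Qed.

Lemma ler_normB_scaled (R : realFieldType) (c b d x y u : R) :
  0 <= c -> 0 <= b -> 0 <= d -> b <= c * d ->
  `|x - b * u| <= c * `|y - d * u| + (`|x| + c * `|y|).
Proof.
move=> c0 b0 d0 b_cd.
have Hx : `|x - b * u| <= `|x| + b * `|u|.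
  by rewrite (le_trans (ler_normB _ _)) // normrM ger0_norm.
have Hb : b * `|u| <= c * (d * `|u|) by rewrite mulrA ler_wpM2r.
have Hd : d * `|u| <= `|y - d * u| + `|y|.
  have := ler_normB y (y - d * u).
  by rewrite opprB addrC subrK normrM ger0_norm // addrC.
have := ler_wpM2l c0 Hd; lra.
Qed.

Section CusumWeights.
Variable R : rcfType.

Definition cusum_lweight (x y : R) := Num.sqrt (y / ((x + y) * x)).
Definition cusum_rweight (x y : R) := Num.sqrt (x / ((x + y) * y)).

Lemma sqrtr_mulr (w a : R) : 0 <= w -> 0 <= a ->
  Num.sqrt w * a = Num.sqrt (w * a ^+ 2).
Proof. by move=> w0 a0; rewrite sqrtrM ?sqr_ge0 // sqrtr_sqr ger0_norm. Qed.

Lemma cusum_weight_balance (x y : R) : 0 < x -> 0 < y ->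
  cusum_lweight x y * x = cusum_rweight x y * y.
Proof.
move=> x0 y0; have xy0 : 0 < x + y by lra.
rewrite !sqrtr_mulr ?divr_ge0 ?mulr_ge0 ?ltW //.
by congr Num.sqrt; field; rewrite !gt_eqF.
Qed.

Lemma cusum_lweight_mulr_le (x' x y : R) : 0 < x' -> x' <= x -> 0 <= y ->
  cusum_lweight x y * x' <= Num.sqrt x'.
Proof.
move=> x'0 x'x y0; have x0 : 0 < x by lra.
have xy0 : 0 < (x + y) * x by rewrite mulr_gt0 //; lra.
rewrite /cusum_lweight (sqrtr_mulr (divr_ge0 y0 (ltW xy0)) (ltW x'0)).
rewrite ler_sqrt ?(ltW x'0) //.
rewrite mulrAC ler_pdivrMr //.
have := ler_wpM2l (mulr_ge0 y0 (ltW x'0)) x'x.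
have := mulr_gt0 (mulr_gt0 x0 x0) x'0; nra.
Qed.

Lemma cusum_rweight_le (c x y z : R) :
  0 <= c -> 0 < x -> 0 < y -> 0 < z -> x <= c ^+ 2 * y ->
  cusum_rweight x (y + z) <= c * cusum_rweight (x + y) z.
Proof.
move=> c0 x0 y0 z0 x_cy; set N := x + y + z.
have N0 : 0 < N by rewrite /N; lra.
have yz0 : 0 < y + z by lra.
rewrite /cusum_rweight -(ger0_norm c0) -sqrtr_sqr -sqrtrM ?sqr_ge0 //.
rewrite addrA -/N ler_sqrt; last first.
  by rewrite mulr_ge0 ?sqr_ge0 // divr_ge0 ?mulr_ge0 ?ltW //; lra.
have -> : x / (N * (y + z)) = x * z / (N * (y + z) * z).
  by field; rewrite ?gt_eqF.
have -> : c ^+ 2 * ((x + y) / (N * z))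
    = c ^+ 2 * ((x + y) * (y + z)) / (N * (y + z) * z).
  by field; rewrite ?gt_eqF.
rewrite ler_pM2r ?invr_gt0 ?mulr_gt0 //.
apply: (le_trans (y := c ^+ 2 * y * z)); first by rewrite ler_pM2r.
rewrite -mulrA ler_wpM2l ?sqr_ge0 //; nra.
Qed.

Lemma cusum_jump_bound (c x y z d U : R) :
  0 <= c <= 1 -> 0 < x -> 0 < y -> 0 < z -> x <= c ^+ 2 * y ->
  `|cusum_lweight x (y + z) * (x * d) - cusum_rweight x (y + z) * U|
    <= c * `|cusum_lweight (x + y) z * (x * d) - cusum_rweight (x + y) z * U|
       + 2 * `|d| * Num.sqrt x.
Proof.
move=> /andP[c0 c1] x0 y0 z0 x_cy.
have := ler_normB_scaled (cusum_lweight x (y + z) * (x * d))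
  (cusum_lweight (x + y) z * (x * d)) U c0 (sqrtr_ge0 _) (sqrtr_ge0 _)
  (cusum_rweight_le c0 x0 y0 z0 x_cy).
have weight_bound w :
    0 <= w -> w * x <= Num.sqrt x -> `|w * (x * d)| <= Num.sqrt x * `|d|.
  move=> w0 wx; rewrite mulrA normrM ger0_norm ?(mulr_ge0 w0 (ltW x0)) //.
  exact: ler_wpM2r.
have Hl := weight_bound _ (sqrtr_ge0 _)
  (cusum_lweight_mulr_le x0 (lexx x) (ltW (addr_gt0 y0 z0))).
have Hr : `|cusum_lweight (x + y) z * (x * d)| <= Num.sqrt x * `|d|.
  by apply: weight_bound (sqrtr_ge0 _) (cusum_lweight_mulr_le x0 _ (ltW z0)); lra.
have Hr' := le_trans (ler_piMl (normr_ge0 _) c1) Hr.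
move/le_trans; apply; rewrite lerD2l.
apply: (le_trans (lerD Hl Hr')).
by rewrite [2 * _ * _]mulrAC -mulrA mulr_natl mulr2n.
Qed.

End CusumWeights.

Lemma ftildeE (R : realType) (f : nat -> R) (s e t : nat) : (s <= t <= e)%N ->
  ftilde f s e t =
    cusum_lweight (t - s)%:R (e - t)%:R * \sum_(s.+1 <= i < t.+1) f i
    - cusum_rweight (t - s)%:R (e - t)%:R * \sum_(t.+1 <= i < e.+1) f i.
Proof.
move=> /andP[st te]; rewrite /ftilde /cusum_lweight /cusum_rweight !natrB //.
by have -> : e%:R - s%:R = t%:R - s%:R + (e%:R - t%:R) :> R by ring.
Qed.

Lemma ftilde_subr_const (R : realType) (f : nat -> R) (c : R) (s e t : nat) :
  (s < t < e)%N -> ftilde (fun i => f i - c) s e t = ftilde f s e t.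
Proof.
move=> /andP[st te]; rewrite !ftildeE ?(ltnW st) ?(ltnW te) //.
rewrite !sumrB !sumr_const_nat !subSS -!(mulr_natr c).
set al := cusum_lweight _ _; set be := cusum_rweight _ _.
have balance : al * (t - s)%:R = be * (e - t)%:R.
  by apply: cusum_weight_balance; rewrite ltr0n subn_gt0.
have -> : forall A B, al * (A - c * (t - s)%:R) - be * (B - c * (e - t)%:R)
    = al * A - be * B + c * (be * (e - t)%:R - al * (t - s)%:R) by move=> A B; ring.
by rewrite balance subrr mulr0 addr0.
Qed.

Section TwoSegments.
Variables (R : realType) (g : nat -> R) (d : R) (s t u e : nat).
Hypotheses (st : (s < t)%N) (tu : (t < u)%N) (ue : (u < e)%N).
Hypothesis g_left : forall i, (s < i <= t)%N -> g i = d.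
Hypothesis g_mid : forall i, (t < i <= u)%N -> g i = 0.

Let sum_mid : \sum_(t.+1 <= i < u.+1) g i = 0.
Proof. by rewrite (sum_nat_const_on (ltnW tu) g_mid) mulr0. Qed.

Lemma ftilde_first_change :
  ftilde g s e t =
    cusum_lweight (t - s)%:R ((u - t)%:R + (e - u)%:R) * ((t - s)%:R * d)
    - cusum_rweight (t - s)%:R ((u - t)%:R + (e - u)%:R)
      * \sum_(u.+1 <= i < e.+1) g i.
Proof.
rewrite ftildeE; last by lia.
rewrite (sum_nat_const_on (ltnW st) g_left) -natrD.
rewrite (big_cat_nat _ (n := u.+1)) /=; [|lia|lia].
rewrite sum_mid add0r.
by have -> : (e - t = u - t + (e - u))%N by lia.
Qed.

Lemma ftilde_second_change :
  ftilde g s e u =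
    cusum_lweight ((t - s)%:R + (u - t)%:R) (e - u)%:R * ((t - s)%:R * d)
    - cusum_rweight ((t - s)%:R + (u - t)%:R) (e - u)%:R
      * \sum_(u.+1 <= i < e.+1) g i.
Proof.
rewrite ftildeE; last by lia.
rewrite (big_cat_nat _ (n := t.+1)) /=; [|lia|lia].
rewrite sum_mid addr0.
rewrite (sum_nat_const_on (ltnW st) g_left) -natrD.
by have -> : (u - s = t - s + (u - t))%N by lia.
Qed.

End TwoSegments.

Theorem lemma23 (R : realType) (f : nat -> R) (T K : nat) (eta : nat -> nat)
  (s e r q : nat) (c1 Delta : R) :
  piecewise_constant f T K eta ->
  (1 <= r)%N -> (1 <= q)%N -> (r + q <= K)%N ->
  (s < e)%N -> (e <= T)%N ->
  (eta r.-1 <= s)%N -> (s < eta r)%N ->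
  (eta (r + q)%N <= e)%N -> (e <= eta (r + q).+1)%N ->
  (eta r.+1 < e)%N ->
  0 < c1 -> c1 <= 1 / 4 ->
  (eta r - s)%N%:R <= c1 ^+ 2 * Delta ->
  Delta <= (eta r.+1 - eta r)%N%:R ->
  `|ftilde f s e (eta r)|
    <= c1 * `|ftilde f s e (eta r.+1)|
       + 2 * `|f (eta r).+1 - f (eta r)| * Num.sqrt (eta r - s)%N%:R.
Proof.
move=> [_ [_ [eta_lt f_const]]] r_gt0 _ rqK _ _ s_ge st _ _ ue c1_gt0 c1_le x_cD D_y.
set t := eta r in st s_ge x_cD D_y *; set u := eta r.+1 in ue D_y *.
have tu : (t < u)%N by apply: eta_lt; lia.
have f_left i : (s < i <= t)%N -> f i = f t.
  have := f_const r.-1; rewrite prednK // => f_seg /andP[si it].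
  by rewrite !f_seg //; lia.
have f_mid i : (t < i <= u)%N -> f i = f t.+1 by apply: f_const; lia.
have g_left i : (s < i <= t)%N -> f i - f t.+1 = f t - f t.+1 by move/f_left ->.
have g_mid i : (t < i <= u)%N -> f i - f t.+1 = 0 by move/f_mid ->; rewrite subrr.
rewrite -[ftilde f s e t](ftilde_subr_const f (f t.+1)); last by lia.
rewrite -[ftilde f s e u](ftilde_subr_const f (f t.+1)); last by lia.
rewrite (ftilde_first_change st tu ue g_left g_mid).
rewrite (ftilde_second_change st tu ue g_left g_mid).
have x_cy : (t - s)%:R <= c1 ^+ 2 * (u - t)%:R :> R.
  exact: le_trans x_cD (ler_wpM2l (sqr_ge0 c1) D_y).
rewrite [`|f t.+1 - _|]distrC.
apply: cusum_jump_bound; rewrite ?ltr0n ?subn_gt0 //; lra.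
Qed.
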